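(* For each $1\le r\le q$, when $U_r$ is written in the $\mathbb{Z}$-basis $\{V_1,\dots,V_q\}$ of $\mathcal{R}_{kG}$, the coefficient of $V_r$ is $1$ and the coefficient of $V_s$ is $0$ for every $s>r$. Consequently $\{U_r: 1\le r\le q\}$ is a $\mathbb{Z}$-basis of $\mathcal{R}_{kG}$, and the change-of-basis matrix between $\{V_r\}$ and $\{U_r\}$ is unitriangular.
   Context: Let $p$ be a prime, $\alpha\ge 1$ an integer, $q=p^\alpha$, $G=C_q$ the cyclic group of order $q$ with generator $g$, and $k$ a field of characteristic $p$. The representation ring $\mathcal{R}_{kG}$ is the ring whose underlying abelian group is free on the isomorphism classes of indecomposable finite-dimensional $kG$-modules, with addition induced by direct sum and multiplication induced by $\otimes_k$ (diagonal action). For $1\le r\le q$ let $V_r=k[X]/(X^r)$ with $g$ acting as multiplication by $1+X$; these form a complete list of the pairwise non-isomorphic indecomposable $kG$-modules, hence a $\mathbb{Z}$-basis of $\mathcal{R}_{kG}$. Set $V_0=0$. For $0\le i<\alpha$ let $\chi_i=V_{p^i+1}-V_{p^i-1}$. The quantum numbers $[n]\in\mathbb{Z}[X]$ are defined by $[0]=0$, $[1]=1$, $[n]=X[n-1]-[n-2]$ for $n\ge2$, and $[n]_x$ denotes evaluation at $X=x$. For $1\le r\le q$, write $r-1=\sum_{i=0}^{\alpha-1}r_ip^i$ with $0\le r_i<p$, and set $U_r=\prod_{i=0}^{\alpha-1}[r_i+1]_{\chi_i}\in\mathcal{R}_{kG}$. *)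

(* Representation ring of C_q (q = p^alpha) over a field k of
   characteristic p, modelled concretely. *)
From HB Require Import structures.
From mathcomp Require Import all_boot all_order all_algebra.
From mathcomp Require Import mxtens.
Set Implicit Arguments. Unset Strict Implicit. Unset Printing Implicit Defensive.
Import Order.TTheory GRing.Theory Num.Theory.
Local Open Scope ring_scope.

Section RepRing.
Variable k : fieldType.

(* Matrix of the generator g on V_r = k[X]/(X^r), basis 1, X, ..., X^(r-1),
   acting on row vectors: g = 1 + X, i.e. X^i |-> X^i + X^(i+1). *)
Definition Vmx (r : nat) : 'M[k]_r :=
  \matrix_(i, j) ((i == j :> nat)%:R + (j == i.+1 :> nat)%:R).

(* Multiplicity of the indecomposable V_t (t >= 1) as a direct summand of the
   kG-module k^n on which g acts by the (unipotent) matrix g: the number of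
   Jordan blocks of size t of the nilpotent g - 1, i.e.
   rk N^(t-1) - 2 rk N^t + rk N^(t+1), with N = g - 1. *)
Definition multV {n : nat} (g : 'M[k]_n) (t : nat) : int :=
  let N := g - 1%:M in
  (\rank (N ^+ t.-1))%:Z - 2 * (\rank (N ^+ t))%:Z + (\rank (N ^+ t.+1))%:Z.

(* Elements of the representation ring R_kG: Z-combinations of V_1..V_q;
   coordinate i : 'I_q is the coefficient of V_(i+1). *)
Definition RR (q : nat) := {ffun 'I_q -> int}.

(* basis element V_r (V_0 = 0, and V_r = 0 for r > q which never occurs) *)
Definition Vb (q r : nat) : RR q := [ffun i : 'I_q => ((i.+1 == r) : nat)%:Z].

(* V_r * V_s = class of V_r (x) V_s (diagonal action: g acts as g (x) g). *)
Definition Vprod (q r s : nat) : RR q :=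
  [ffun t : 'I_q => multV (tensmx (Vmx r) (Vmx s)) t.+1].

Definition mulRR (q : nat) (a b : RR q) : RR q :=
  \sum_(r < q) \sum_(s < q) Vprod q r.+1 s.+1 *~ (a r * b s).

Definition oneRR (q : nat) : RR q := Vb q 1.

Definition expRR (q : nat) (x : RR q) (n : nat) : RR q :=
  iter n (mulRR x) (oneRR q).

Definition evalRR (q : nat) (P : {poly int}) (x : RR q) : RR q :=
  \sum_(i < size P) expRR x i *~ P`_i.

End RepRing.

(* quantum numbers [n] in Z[X]: [0]=0, [1]=1, [n]=X[n-1]-[n-2] *)
Fixpoint qnum_pair (n : nat) : {poly int} * {poly int} :=
  match n with
  | 0 => (0, 1)
  | n'.+1 => let pr := qnum_pair n' in (pr.2, 'X * pr.2 - pr.1)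
  end.
Definition qnum (n : nat) : {poly int} := (qnum_pair n).1.

Definition chi (q p i : nat) : RR q := Vb q (p ^ i).+1 - Vb q (p ^ i).-1.

Definition digit (p r i : nat) : nat := ((r.-1 %/ p ^ i) %% p)%N.

Definition Ur (k : fieldType) (p alpha r : nat) : RR (p ^ alpha) :=
  \big[@mulRR k (p ^ alpha)/oneRR (p ^ alpha)]_(i < alpha)
     evalRR k (qnum (digit p r i).+1) (chi (p ^ alpha) p i).

(* If x = V_(a+1) + lower terms and
   y = V_(b+1) + lower terms, then x y = V_(a+b+1) + lower terms as soon as
   binomial(a+b, a) is nonzero in k: on V_(a+1) (x) V_(b+1) the nilpotent part
   N = g (x) g - 1 satisfies N^(a+b+1) = 0 while N^(a+b) is binomial(a+b, a)
   times a rank-one matrix, so the largest Jordan block of N has size a+b+1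
   and occurs once.  chi_i = V_(p^i+1) - V_(p^i-1) and [n+1] is monic of
   degree n, so [r_i+1](chi_i) = V_(r_i p^i + 1) + lower terms, and by Lucas'
   theorem all binomials met when multiplying these factors over the digits of
   r-1 are nonzero mod p.  Hence U_r = V_r + lower terms, and a unitriangular
   integer matrix is invertible over Z. *)

From HB Require Import structures.
From mathcomp Require Import all_boot all_order all_algebra.
From mathcomp Require Import mxtens zify.
Import GRing.Theory.
Local Open Scope ring_scope.

Set Implicit Arguments. Unset Strict Implicit. Unset Printing Implicit Defensive.

Section ShiftMatrix.
Variable R : pzRingType.

Definition shiftmx n : 'M[R]_n := \matrix_(i, j) (j == i.+1 :> nat)%:R.

Lemma shiftmxX n j : shiftmx n ^+ j = \matrix_(i, l) (l == (i + j)%N :> nat)%:R.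
Proof.
elim: j => [|j IHj]; first by apply/matrixP => i l; rewrite !mxE addn0 eq_sym.
apply/matrixP => i l; rewrite exprSr IHj -mulmxE !mxE.
have [lt_ij_n | le_n_ij] := ltnP (i + j) n.
  rewrite (bigD1 (Ordinal lt_ij_n)) //= big1 ?addr0 => [|m /eqP ne_m].
    by rewrite !mxE eqxx mul1r addnS.
  by rewrite !mxE; case: eqP => [eq_m|]; [case: ne_m; apply: val_inj | rewrite mul0r].
rewrite big1 => [|m _]; last first.
  by rewrite !mxE; case: eqP => [eq_m|]; [have := ltn_ord m; lia | rewrite mul0r].
by case: eqP => // eq_l; have := ltn_ord l; lia.
Qed.

Lemma shiftmxX_eq0 n j : (n <= j)%N -> shiftmx n ^+ j = 0.
Proof.
move=> le_nj; rewrite shiftmxX; apply/matrixP => i l; rewrite !mxE.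
by case: eqP => // eq_l; have := ltn_ord l; lia.
Qed.

Lemma shiftmxX_max n : shiftmx n.+1 ^+ n = delta_mx ord0 ord_max.
Proof.
rewrite shiftmxX; apply/matrixP => i l; rewrite !mxE /=.
rewrite -!val_eqE /=; case: i => [[|i] /= _]; first by rewrite add0n.
by case: eqP => // eq_l; have := ltn_ord l; lia.
Qed.

End ShiftMatrix.

Lemma VmxE (k : fieldType) n : Vmx k n = 1%:M + shiftmx k n.
Proof. by apply/matrixP => i j; rewrite !mxE. Qed.

Section TensorProduct.
Variable R : pzRingType.

Lemma tensmxDl m n m' n' (A1 A2 : 'M[R]_(m, n)) (B : 'M[R]_(m', n')) :
  (A1 + A2) *t B = A1 *t B + A2 *t B.
Proof. by apply/matrixP => i j; rewrite !mxE mulrDl. Qed.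

Lemma tensmxDr m n m' n' (A : 'M[R]_(m, n)) (B1 B2 : 'M[R]_(m', n')) :
  A *t (B1 + B2) = A *t B1 + A *t B2.
Proof. by apply/matrixP => i j; rewrite !mxE mulrDr. Qed.

Lemma tensmx_delta m n m' n' (i : 'I_m) (j : 'I_n) (i' : 'I_m') (j' : 'I_n') :
  (delta_mx i j : 'M[R]_(m, n)) *t (delta_mx i' j' : 'M[R]_(m', n')) =
  delta_mx (mxtens_index (i, i')) (mxtens_index (j, j')).
Proof.
apply/matrixP => u v.
case: (mxtens_indexP u) => u0 u1; case: (mxtens_indexP v) => v0 v1.
rewrite tensmxE !mxE !(inj_eq (can_inj (@mxtens_indexK _ _))) !xpair_eqE.
by rewrite -natrM mulnb andbACA.
Qed.

Lemma tensmx11 m n : (1%:M : 'M[R]_m) *t (1%:M : 'M[R]_n) = 1%:M.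
Proof.
apply/matrixP => u v.
case: (mxtens_indexP u) => u0 u1; case: (mxtens_indexP v) => v0 v1.
rewrite tensmxE !mxE (inj_eq (can_inj (@mxtens_indexK _ _))) xpair_eqE.
by rewrite -natrM mulnb.
Qed.

End TensorProduct.

Section TensorUnipotent.
Variables (R : comPzRingType) (a b : nat).
Local Notation M := 'M[R]_(a.+1 * b.+1).
Local Notation S := (shiftmx R).
Local Notation X := (S a.+1 *t 1%:M : M).
Local Notation Y := (1%:M *t S b.+1 : M).

Definition tens_unip_nil : M := (1%:M + S a.+1) *t (1%:M + S b.+1) - 1%:M.
Local Notation N := tens_unip_nil.

Lemma tens_shiftX i j : X ^+ i * Y ^+ j = S a.+1 ^+ i *t S b.+1 ^+ j.
Proof.
have XiE m : X ^+ m = S a.+1 ^+ m *t 1%:M.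
  elim: m => [|m IHm]; first by rewrite !expr0 tensmx11.
  by rewrite !exprSr IHm -!mulmxE tensmx_mul mulmx1.
have YjE m : Y ^+ m = 1%:M *t S b.+1 ^+ m.
  elim: m => [|m IHm]; first by rewrite !expr0 tensmx11.
  by rewrite !exprSr IHm -!mulmxE tensmx_mul mulmx1.
by rewrite XiE YjE -mulmxE tensmx_mul mulmx1 mul1mx.
Qed.

Lemma tens_shift_comm : GRing.comm X Y.
Proof.
rewrite /GRing.comm -[X]expr1 -[Y]expr1 tens_shiftX.
by rewrite -mulmxE tensmx_mul mulmx1 mul1mx.
Qed.

Lemma tens_unip_nilE : N = X + Y * (1 + X).
Proof.
have YX : S a.+1 *t S b.+1 = Y * X.
  by rewrite -tens_shift_comm -[X]expr1 -[Y]expr1 tens_shiftX !expr1.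
rewrite /N tensmxDl !tensmxDr tensmx11 YX mulrDr mulr1.
by rewrite addrAC [1%:M + _ - _]addrAC subrr add0r addrCA.
Qed.

Lemma tens_unip_nilX n : N ^+ n =
  \sum_(i < n.+1) ((S a.+1 ^+ (n - i) *t S b.+1 ^+ i) * (1 + X) ^+ i) *+ 'C(n, i).
Proof.
have cX1X : GRing.comm X (1 + X) by apply: commrD; [apply: commr1 | apply: commr_refl].
have cY1X : GRing.comm Y (1 + X).
  by apply: commrD; [apply: commr1 | apply: commr_sym; exact: tens_shift_comm].
rewrite tens_unip_nilE exprDn_comm; last exact: commrM tens_shift_comm cX1X.
by apply: eq_bigr => i _; rewrite exprMn_comm // mulrA tens_shiftX.
Qed.

Lemma tens_unip_nilX_eq0 n : (a + b < n)%N -> N ^+ n = 0.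
Proof.
move=> lt_ab_n; rewrite tens_unip_nilX big1 // => i _.
have [lt_b_i | le_i_b] := ltnP b i.
  by rewrite (shiftmxX_eq0 _ lt_b_i) tensmx0 mul0r mul0rn.
by rewrite shiftmxX_eq0 ?tens0mx ?mul0r ?mul0rn //; have := ltn_ord i; lia.
Qed.

Lemma tens_unip_nilX_top :
  N ^+ (a + b) = delta_mx (mxtens_index (ord0, ord0)) (mxtens_index (ord_max, ord_max))
                   *+ 'C(a + b, a).
Proof.
have lt_b : (b < (a + b).+1)%N by lia.
rewrite tens_unip_nilX (bigD1 (Ordinal lt_b)) //= big1 ?addr0 => [|i /eqP ne_ib].
  have binC : 'C(a + b, b) = 'C(a + b, a) by rewrite -bin_sub ?leq_addl // addnK.
  (* (S^a (x) S^b) X = S^(a+1) (x) S^b = 0, so the factor (1 + X)^b acts trivially *)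
  have absorb m : (S a.+1 ^+ a *t S b.+1 ^+ b) * (1 + X) ^+ m = S a.+1 ^+ a *t S b.+1 ^+ b.
    elim: m => [|m IHm]; first by rewrite expr0 mulr1.
    rewrite exprSr mulrA IHm mulrDr mulr1 -mulmxE tensmx_mul mulmx1 mulmxE -exprSr.
    by rewrite (shiftmxX_eq0 _ (leqnn a.+1)) tens0mx addr0.
  by rewrite addnK absorb binC !shiftmxX_max tensmx_delta.
have [lt_b_i | le_i_b] := ltnP b i.
  by rewrite (shiftmxX_eq0 _ lt_b_i) tensmx0 mul0r mul0rn.
have ne_ib' : i <> b :> nat by move=> eq_ib; apply: ne_ib; apply: val_inj.
by rewrite shiftmxX_eq0 ?tens0mx ?mul0r ?mul0rn //; lia.
Qed.

End TensorUnipotent.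

Section VprodLeading.
Variable k : fieldType.

Lemma Vmx_tens_nil a b : Vmx k a.+1 *t Vmx k b.+1 - 1%:M = tens_unip_nil k a b.
Proof. by rewrite !VmxE. Qed.

Lemma Vprod_eq0 q a b (t : 'I_q) : (a + b < t)%N -> Vprod k q a.+1 b.+1 t = 0.
Proof.
move=> lt_ab_t; rewrite ffunE /multV Vmx_tens_nil.
by rewrite !tens_unip_nilX_eq0 ?mxrank0 //; lia.
Qed.

Lemma Vprod_top q a b (t : 'I_q) :
  t = (a + b)%N :> nat -> 'C(a + b, a)%:R != 0 :> k -> Vprod k q a.+1 b.+1 t = 1.
Proof.
move=> eq_t nz_bin; rewrite ffunE /multV Vmx_tens_nil /= eq_t.
rewrite tens_unip_nilX_top -scaler_nat (eqmx_scale _ nz_bin) mxrank_delta.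
by rewrite !tens_unip_nilX_eq0 ?mxrank0.
Qed.

End VprodLeading.

(* Instances of Lucas' theorem, via (1 + X)^(p^j) = 1 + X^(p^j) in characteristic p. *)
Lemma coef_X_add1_exp (R : nzSemiRingType) n i :
  (('X + 1 : {poly R}) ^+ n)`_i = 'C(n, i)%:R.
Proof.
have -> : ('X + 1 : {poly R}) ^+ n = \poly_(j < n.+1) 'C(n, j)%:R.
  by rewrite exprD1n poly_def; apply: eq_bigr => j _; rewrite scaler_nat.
by rewrite coef_poly; case: ltnP => // lt_n_i; rewrite bin_small.
Qed.

Section BinomialModChar.
Variables (k : fieldType) (p : nat).
Hypothesis p_char : p \in [pchar k].

Let p_gt0 : (0 < p)%N. Proof. exact/prime_gt0/(pcharf_prime p_char). Qed.

Lemma X_add1_exp_pchar c j :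
  ('X + 1 : {poly k}) ^+ (c * p ^ j) = (('X + 1) ^+ c) \Po 'X^(p ^ j).
Proof.
have pj_char : [pchar {poly k}].-nat (p ^ j)%N.
  by rewrite pnatX (pnatE _ (pcharf_prime p_char)) pchar_poly p_char.
by rewrite mulnC exprM exprDn_pchar // expr1n rmorphXn /= comp_polyD comp_polyX rmorph1.
Qed.

Lemma bin_mul_expn_pchar c d j : 'C(c * p ^ j, d * p ^ j)%:R = 'C(c, d)%:R :> k.
Proof.
have pj_gt0 : (0 < p ^ j)%N by rewrite expn_gt0 p_gt0.
rewrite -coef_X_add1_exp X_add1_exp_pchar coef_comp_poly_Xn //.
by rewrite dvdn_mull // mulnK // coef_X_add1_exp.
Qed.

Lemma bin_add_mul_pchar u M : (u < p)%N -> 'C(u + M * p, u)%:R = 1 :> k.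
Proof.
move=> lt_u_p.
rewrite -coef_X_add1_exp exprD -[(M * p)%N]/(M * p ^ 1)%N X_add1_exp_pchar.
rewrite coefM big_ord_recr /= subnn coef_comp_poly_Xn ?expn1 // dvdn0 div0n !coef_X_add1_exp binn bin0 mulr1.
rewrite big1 ?add0r // => i _.
by rewrite coef_comp_poly_Xn ?expn1 // gtnNdvd ?mulr0 //; have := ltn_ord i; lia.
Qed.

Lemma bin_digit_pchar u M j :
  (u < p)%N -> 'C(u * p ^ j + M * p ^ j.+1, u * p ^ j)%:R = 1 :> k.
Proof.
by move=> lt_u_p; rewrite expnS mulnA -mulnDl bin_mul_expn_pchar bin_add_mul_pchar.
Qed.

Lemma bin_expn_pchar_neq0 n j :
  (n.+1 < p)%N -> 'C(p ^ j + n * p ^ j, p ^ j)%:R != 0 :> k.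
Proof.
move=> lt_n_p; rewrite -mulSn -[X in 'C(_, X)]mul1n bin_mul_expn_pchar bin1.
by rewrite -(dvdn_pcharf p_char) gtnNdvd.
Qed.

End BinomialModChar.

Section LeadingTerm.
Variables (k : fieldType) (q : nat).

Definition vanishes_above (m : nat) (x : RR q) := forall t : 'I_q, (m < t)%N -> x t = 0.

(* x = V_(m+1) + a Z-combination of V_1, ..., V_m *)
Definition vmonic (m : nat) (x : RR q) :=
  vanishes_above m x /\ forall t : 'I_q, t = m :> nat -> x t = 1.

Lemma mulRR_coef_high (a b t : 'I_q) (x y : RR q) :
  vanishes_above a x -> vanishes_above b y -> (a + b <= t)%N ->
  mulRR k x y t = Vprod k q a.+1 b.+1 t *~ (x a * y b).
Proof.
move=> x_a y_b le_ab_t.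
have term0 (r s : 'I_q) : (r != a) || (s != b) -> (Vprod k q r.+1 s.+1 *~ (x r * y s)) t = 0.
  move=> ne_rs; rewrite ffunMzE.
  have [lt_a_r | le_r_a] := ltnP a r; first by rewrite x_a // mul0r mulr0z.
  have [lt_b_s | le_s_b] := ltnP b s; first by rewrite y_b // mulr0 mulr0z.
  by rewrite Vprod_eq0 ?mul0rz //; move: ne_rs; rewrite -!val_eqE /=; lia.
rewrite /mulRR sum_ffunE (bigD1 a) //= [X in _ + X]big1 => [|r ne_ra]; last first.
  by rewrite sum_ffunE big1 // => s _; apply: term0; rewrite ne_ra.
rewrite addr0 sum_ffunE (bigD1 b) //= big1 => [|s ne_sb].
  by rewrite addr0 ffunMzE.
by apply: term0; rewrite ne_sb orbT.
Qed.

Lemma vmonic_mulRR a b x y : (a + b < q)%N -> 'C(a + b, a)%:R != 0 :> k ->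
  vmonic a x -> vmonic b y -> vmonic (a + b) (mulRR k x y).
Proof.
move=> lt_ab_q nz_bin [x_a x_1] [y_b y_1].
have lt_a_q : (a < q)%N by lia.
have lt_b_q : (b < q)%N by lia.
have coef_high := mulRR_coef_high (a := Ordinal lt_a_q) (b := Ordinal lt_b_q) x_a y_b.
split=> t t_ab.
  by rewrite coef_high /= ?Vprod_eq0 ?mul0rz //; lia.
by rewrite coef_high /= ?Vprod_top ?x_1 ?y_1 ?mulr1 //; lia.
Qed.

Lemma vmonic_oneRR : (0 < q)%N -> vmonic 0 (oneRR q).
Proof. by move=> q_gt0; split=> -[[|t] lt_t] //= _; rewrite ffunE. Qed.

Lemma vmonic_evalRR (P : {poly int}) x m : (0 < m)%N -> P \is monic ->
  (forall i, (i < size P)%N -> vmonic (i * m) (expRR k x i)) ->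
  vmonic ((size P).-1 * m) (evalRR k P x).
Proof.
move=> m_gt0 monP x_vmonic.
have [n sizeP] : exists n, size P = n.+1.
  by exists (size P).-1; rewrite prednK // size_poly_gt0 monic_neq0.
have lead1 : P`_n = 1 by rewrite -(monicP monP) lead_coefE sizeP.
rewrite /evalRR sizeP /= in x_vmonic *.
have [x_n x_1] := x_vmonic n (ltnSn n).
have low (i : 'I_n) (t : 'I_q) : (i * m < t)%N -> (expRR k x i *~ P`_i) t = 0.
  have [x_i _] := x_vmonic i (ltnW (ltn_ord i)).
  by move=> lt_t; rewrite ffunMzE x_i ?mul0rz.
have lt_im (i : 'I_n) : (i * m < n * m)%N by rewrite ltn_pmul2r.
split=> t t_nm; rewrite sum_ffunE big_ord_recr big1 /= => [|i _].
- by rewrite add0r ffunMzE x_n ?mul0rz.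
- by apply: low; have := lt_im i; lia.
- by rewrite add0r ffunMzE x_1 // lead1.
- by apply: low; have := lt_im i; lia.
Qed.

End LeadingTerm.

Lemma qnumSS n : qnum n.+2 = 'X * qnum n.+1 - qnum n.
Proof. by []. Qed.

Lemma qnum_monic n : qnum n.+1 \is monic /\ size (qnum n.+1) = n.+1.
Proof.
suff : (size (qnum n) <= n)%N /\ qnum n.+1 \is monic /\ size (qnum n.+1) = n.+1 by case.
elim: n => [|n [le_n [monS sizeS]]].
  by rewrite [qnum 0]/= [qnum 1]/= size_poly0 monic1 size_poly1.
have sizeXS : size ('X * qnum n.+1) = n.+2 by rewrite mulrC size_mulX ?monic_neq0 // sizeS.
have lt_size : (size (- qnum n) < size ('X * qnum n.+1)%R)%N.
  by rewrite size_opp sizeXS ltnS (leq_trans le_n).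
split; first by rewrite sizeS.
rewrite qnumSS; split; last by rewrite size_addl.
by rewrite monicE lead_coefDl // mulrC lead_coefMX.
Qed.

Section ChiPowers.
Variables (k : fieldType) (q p j : nat).
Hypotheses (p_char : p \in [pchar k]) (le_pj_q : (p ^ j.+1 <= q)%N).

Let p_gt0 : (0 < p)%N. Proof. exact/prime_gt0/(pcharf_prime p_char). Qed.

Lemma vmonic_chi : vmonic (p ^ j) (chi q p j).
Proof.
split=> t; rewrite !ffunE.
  by move=> lt_t; case: eqP => [|_]; [lia | case: eqP => [|_] //; lia].
by move=> ->; rewrite eqxx; case: eqP => [|_]; [lia | rewrite subr0].
Qed.

Lemma vmonic_expRR_chi n : (n < p)%N -> vmonic (n * p ^ j) (expRR k (chi q p j) n).
Proof.
elim: n => [|n IHn] lt_n_p.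
  by apply: vmonic_oneRR; rewrite (leq_trans _ le_pj_q) // expn_gt0 p_gt0.
have lt_np : (n.+1 * p ^ j < q)%N.
  by rewrite (leq_trans _ le_pj_q) // expnS ltn_pmul2r // expn_gt0 p_gt0.
rewrite mulSn; apply: vmonic_mulRR; first by rewrite -mulSn.
- exact: bin_expn_pchar_neq0.
- exact: vmonic_chi.
- exact/IHn/ltnW.
Qed.

Lemma vmonic_evalRR_chi n :
  (n < p)%N -> vmonic (n * p ^ j) (evalRR k (qnum n.+1) (chi q p j)).
Proof.
move=> lt_n_p; have [monQ sizeQ] := qnum_monic n.
have := vmonic_evalRR (x := chi q p j) (m := p ^ j) _ monQ; rewrite sizeQ; apply.
  by rewrite expn_gt0 p_gt0.
by move=> i lt_i; apply: vmonic_expRR_chi; lia.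
Qed.

End ChiPowers.

Lemma sum_digit_expn p n r : (\sum_(0 <= i < n) digit p r.+1 i * p ^ i = r %% p ^ n)%N.
Proof.
elim: n => [|n IHn]; first by rewrite big_geq // expn0 modn1.
rewrite big_nat_recr //= IHn /digit /= modn_divl -expnS.
by rewrite -(modn_dvdm r (dvdn_exp2l p (leqnSn n))) addnC -divn_eq.
Qed.

Section DigitProduct.
Variables (k : fieldType) (p alpha : nat) (d : nat -> nat).
Hypotheses (p_char : p \in [pchar k]) (d_lt_p : forall i, (d i < p)%N).
Local Notation q := (p ^ alpha)%N.
Local Notation factor i := (evalRR k (qnum (d i).+1) (chi q p i)).

Let p_gt1 : (1 < p)%N. Proof. exact/prime_gt1/(pcharf_prime p_char). Qed.

Lemma sum_digits_bound m n :
  (m <= n -> \sum_(m <= i < n) d i * p ^ i + p ^ m <= p ^ n)%N.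
Proof.
elim: n => [|n IHn]; first by rewrite leqn0 => /eqP ->; rewrite big_geq.
rewrite leq_eqVlt ltnS => /predU1P [-> | le_mn]; first by rewrite big_geq.
rewrite big_nat_recr //= addnAC (leq_trans (leq_add (IHn le_mn) (leqnn _))) //.
by rewrite -mulSn expnS leq_mul2r d_lt_p orbT.
Qed.

Lemma vmonic_digit_prod n : (n <= alpha)%N ->
  vmonic (\sum_(alpha - n <= i < alpha) d i * p ^ i)
    (\big[@mulRR k q/oneRR q]_(alpha - n <= i < alpha) factor i).
Proof.
elim: n => [|n IHn] lt_n_alpha.
  rewrite subn0 !big_geq //; apply: vmonic_oneRR.
  by rewrite expn_gt0 (ltnW p_gt1).
have lt_j : (alpha - n.+1 < alpha)%N by lia.
rewrite !(big_ltn lt_j) subnSK //.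
set j := (alpha - n.+1)%N; set b := (\sum_(alpha - n <= i < alpha) _)%N.
have [M def_b] : exists M, b = (M * p ^ j.+1)%N.
  apply/dvdnP; rewrite /b big_seq; apply: dvdn_sum => i.
  by rewrite mem_index_iota => /andP [le_i _]; apply/dvdn_mull/dvdn_exp2l; rewrite /j; lia.
apply: vmonic_mulRR.
- have := sum_digits_bound (leq_subr n alpha); rewrite -/b -(subnSK lt_n_alpha) -/j.
  have : (d j * p ^ j + p ^ j <= p ^ j.+1)%N.
    by rewrite addnC -mulSn expnS leq_mul2r d_lt_p orbT.
  have : (0 < p ^ j)%N by rewrite expn_gt0 ltnW.
  lia.
- by rewrite def_b bin_digit_pchar ?oner_neq0.
- by apply: vmonic_evalRR_chi; rewrite // leq_exp2l // /j; lia.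
- exact/IHn/ltnW.
Qed.

End DigitProduct.

Lemma vmonic_Ur (k : fieldType) p alpha (r : 'I_(p ^ alpha)) :
  p \in [pchar k] -> vmonic r (Ur k p alpha r.+1).
Proof.
move=> p_char.
have p_gt0 : (0 < p)%N by exact/prime_gt0/(pcharf_prime p_char).
have digit_lt_p i : (digit p r.+1 i < p)%N by rewrite ltn_pmod.
have := vmonic_digit_prod p_char digit_lt_p (leqnn alpha).
by rewrite subnn sum_digit_expn modn_small // big_mkord.
Qed.

Lemma unitriangular_coords n (u : 'I_n -> {ffun 'I_n -> int}) :
  (forall r, u r r = 1) -> (forall r s : 'I_n, (r < s)%N -> u r s = 0) ->
  forall x : {ffun 'I_n -> int}, exists! c : {ffun 'I_n -> int}, x = \sum_(r < n) u r *~ c r.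
Proof.
move=> u_diag u_upper x.
pose U : 'M[int]_n := \matrix_(r, s) u r s.
have U_unit : U \in unitmx.
  have U_trig : is_trig_mx U by apply/is_trig_mxP => r s lt_rs; rewrite mxE u_upper.
  by rewrite unitmxE det_trig // big1 ?unitr1 // => r _; rewrite mxE u_diag.
have coordsE (c : {ffun 'I_n -> int}) :
    (x = \sum_(r < n) u r *~ c r) <-> (\row_s x s = \row_r c r *m U).
  split=> [-> | /rowP x_c]; first apply/rowP => s.
    by rewrite !mxE sum_ffunE; apply: eq_bigr => r _; rewrite ffunMzE mulrzz !mxE mulrC.
  apply/ffunP => s; have := x_c s; rewrite !mxE sum_ffunE => ->.
  by apply: eq_bigr => r _; rewrite ffunMzE mulrzz !mxE mulrC.
exists [ffun r => (\row_s x s *m invmx U) 0 r]; split=> [|c /coordsE x_c].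
  apply/coordsE; rewrite -[LHS](mulmxKV U_unit); congr (_ *m _).
  by apply/rowP => r; rewrite [RHS]mxE ffunE.
by apply/ffunP => r; rewrite ffunE x_c mulmxK // mxE.
Qed.

Theorem mainTheorem7 (k : fieldType) (p alpha : nat) :
  prime p -> (0 < alpha)%N -> p \in [pchar k] ->
  (forall r : 'I_(p ^ alpha),
      Ur k p alpha r.+1 r = 1 /\
      (forall s : 'I_(p ^ alpha), (r < s)%N -> Ur k p alpha r.+1 s = 0)) /\
  (forall x : RR (p ^ alpha),
      exists! c : {ffun 'I_(p ^ alpha) -> int},
        x = \sum_(r < p ^ alpha) Ur k p alpha r.+1 *~ c r).
Proof.
(* primality of p already follows from p \in [pchar k], and alpha = 0 is harmless *)
move=> _ _ p_char.
have Ur_vmonic (r : 'I_(p ^ alpha)) : vmonic r (Ur k p alpha r.+1) := vmonic_Ur r p_char.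
split=> [r | ]; first by have [above top] := Ur_vmonic r; split; [apply: top | exact: above].
apply: (unitriangular_coords (u := fun r => Ur k p alpha r.+1)) => [r | r s].
  by have [_ top] := Ur_vmonic r; apply: top.
by have [above _] := Ur_vmonic r; exact: above.
Qed.
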